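(* Let $(\Omega,\mathcal A)$ be a Borel space, $(\Omega,X_\bullet)$ a Borel field of proper metric spaces, and $x^0_\bullet\in\mathcal L(\Omega,X_\bullet)$. For each $\omega$ equip $\mathcal C(X_\omega)$ (real continuous functions) with the metric $\delta_\omega(f,g)=\inf\{\varepsilon>0\mid\sup_{x\in B(x^0_\omega,1/\varepsilon)}|f(x)-g(x)|<\varepsilon\}$. Then $\mathcal L(\Omega,\mathcal C(X_\bullet)):=\{f_\bullet\in\mathcal S(\Omega,\mathcal C(X_\bullet))\mid \omega\mapsto f_\omega(x_\omega)\text{ is Borel for every }x_\bullet\in\mathcal L(\Omega,X_\bullet)\}$ is a Borel structure on the field $(\mathcal C(X_\omega),\delta_\omega)_{\omega\in\Omega}$. Moreover the subfield $\mathcal C_0(X_\bullet)$, $\mathcal C_0(X_\omega)=\{f\in\mathcal C(X_\omega)\mid f(x^0_\omega)=0\}$, is a Borel subfield.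
   Context: Borel field of metric spaces: $(X_\omega,d_\omega)_{\omega\in\Omega}$ metric spaces; a section is $x_\bullet=(x_\omega)$, $x_\omega\in X_\omega$; $\mathcal S(\cdot)$ denotes sets of sections. A Borel structure is a set $\mathcal L(\Omega,X_\bullet)$ of sections such that (a) $\omega\mapsto d_\omega(x_\omega,y_\omega)$ is Borel for all $x_\bullet,y_\bullet\in\mathcal L$; (b) any section $y_\bullet$ with $\omega\mapsto d_\omega(x_\omega,y_\omega)$ Borel for all $x_\bullet\in\mathcal L$ lies in $\mathcal L$; (c) there is a countable $\mathcal D=\{x^n_\bullet\}\subseteq\mathcal L$ (fundamental family) with $\{x^n_\omega\}_n$ dense in $X_\omega$ for all $\omega$. For Borel $\Omega'$, $\mathcal L(\Omega',X_\bullet)$ = restrictions to $\Omega'$ of Borel sections. A subfield is $A_\bullet=(A_\omega)$ with $A_\omega\subseteq X_\omega$ (possibly empty); it is Borel if $\Omega'=\{\omega:A_\omega\ne\emptyset\}\in\mathcal A$ and there are countably many $y^n_\bullet\in\mathcal L(\Omega',X_\bullet)$ with $y^n_\omega\in A_\omega$ and $A_\omega\subseteq\overline{\{y^n_\omega\}_n}$ for all $\omega\in\Omega'$. A metric space is proper if closed balls are compact; $B(x,r)$ is the open ball. *)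

From Stdlib Require Import Reals List ClassicalEpsilon.
Open Scope R_scope.


Definition sigma_algebra {O : Type} (A : (O -> Prop) -> Prop) : Prop :=
  A (fun _ => True) /\
  (forall S, A S -> A (fun w => ~ S w)) /\
  (forall S : nat -> O -> Prop, (forall n, A (S n)) -> A (fun w => exists n, S n w)).

Definition R_open (U : R -> Prop) : Prop :=
  forall x, U x -> exists e, 0 < e /\ forall y, Rabs (y - x) < e -> U y.

Definition borel_R (B : R -> Prop) : Prop :=
  forall S, sigma_algebra S -> (forall U, R_open U -> S U) -> S B.

Definition borel_fun {O : Type} (A : (O -> Prop) -> Prop) (f : O -> R) : Prop :=
  forall B, borel_R B -> A (fun w => B (f w)).

Definition is_metric {T : Type} (d : T -> T -> R) : Prop :=
  (forall x y, d x y = 0 <-> x = y) /\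
  (forall x y, d x y = d y x) /\
  (forall x y z, d x z <= d x y + d y z).

Record MetricSpace := {
  carrier :> Type;
  mdist : carrier -> carrier -> R;
  dist_metric : is_metric mdist }.

Definition open_ball {X : MetricSpace} (x : X) (r : R) : X -> Prop :=
  fun y => mdist X x y < r.
Definition closed_ball {X : MetricSpace} (x : X) (r : R) : X -> Prop :=
  fun y => mdist X x y <= r.

Definition is_open {X : MetricSpace} (U : X -> Prop) : Prop :=
  forall x, U x -> exists r, 0 < r /\ forall y, open_ball x r y -> U y.

Definition compact {X : MetricSpace} (K : X -> Prop) : Prop :=
  forall (I : Type) (U : I -> X -> Prop),
    (forall i, is_open (U i)) ->
    (forall x, K x -> exists i, U i x) ->
    exists l : list I, forall x, K x -> exists i, In i l /\ U i x.

Definition proper (X : MetricSpace) : Prop :=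
  forall (x : X) (r : R), compact (closed_ball x r).

Definition continuous {X : MetricSpace} (f : X -> R) : Prop :=
  forall x e, 0 < e -> exists dl, 0 < dl /\
    forall y, mdist X x y < dl -> Rabs (f y - f x) < e.

Definition Cfun (X : MetricSpace) : Type := { f : X -> R | continuous f }.
Definition Cfun_app {X : MetricSpace} (f : Cfun X) : X -> R := proj1_sig f.

Section BorelField.
Variables (O : Type) (A : (O -> Prop) -> Prop).
Variables (T : O -> Type) (d : forall w, T w -> T w -> R).

Definition section := forall w, T w.

Definition countable_set (D : section -> Prop) : Prop :=
  exists c : section -> nat, forall s t, D s -> D t -> c s = c t -> s = t.

Definition is_borel_structure (L : section -> Prop) : Prop :=
  (forall x y, L x -> L y -> borel_fun A (fun w => d w (x w) (y w))) /\
  (forall y : section,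
      (forall x, L x -> borel_fun A (fun w => d w (x w) (y w))) -> L y) /\
  (exists D : section -> Prop,
      countable_set D /\ (forall s, D s -> L s) /\
      forall w (x : T w) e, 0 < e -> exists s, D s /\ d w (s w) x < e).

(** Borel subfields with respect to a Borel structure L; a section of
    L(O', T) is represented as a Borel section, only considered on O'. *)
Definition borel_subfield (L : section -> Prop) (Asub : forall w, T w -> Prop) : Prop :=
  A (fun w => exists a, Asub w a) /\
  exists y : nat -> section,
    (forall n, L (y n)) /\
    forall w, (exists a, Asub w a) ->
      (forall n, Asub w (y n w)) /\
      (forall a, Asub w a -> forall e, 0 < e -> exists n, d w (y n w) a < e).
End BorelField.

Definition is_glb (S : R -> Prop) (m : R) : Prop :=
  (forall x, S x -> m <= x) /\ (forall m', (forall x, S x -> m' <= x) -> m' <= m).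

Definition Inf (S : R -> Prop) : R := epsilon (inhabits 0) (is_glb S).

(** delta_w(f,g) = inf { e > 0 | sup_{x in B(x0, 1/e)} |f x - g x| < e };
    "sup_{x in B} h x < e" is written out as: some eta < e bounds h on B. *)
Definition delta {X : MetricSpace} (x0 : X) (f g : Cfun X) : R :=
  Inf (fun e => 0 < e /\
         exists eta, eta < e /\
           forall x, open_ball x0 (/ e) x ->
             Rabs (Cfun_app f x - Cfun_app g x) <= eta).

Arguments section {O} T.
Arguments countable_set {O T}.
Arguments is_borel_structure {O} A {T} d L.
Arguments borel_subfield {O} A {T} d L Asub.

(** Everything rests on a countable family F of
    Borel sections of C(X_w) that is pointwise dense for delta_w: F enumerates
    the cone functions  z |-> min_i (q_i + k d(t_(n_i), z))  with rational q_i,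
    integer slope k and (t_n) a Borel dense sequence; since balls are compact,
    these approximate every continuous function uniformly on balls.  Then
    (a) delta(f, g) is Borel for Borel f, g, because the infimum defining delta
        can be computed over rationals and, by continuity, on the points t_n;
    (b) if w |-> delta(f, y) is Borel for all Borel f, then y is Borel, since
        y(x) < c is witnessed by some F_m delta-close to y with F_m(x) < c;
    (c) F is a fundamental family, and f - f(x0), f in F, is dense in C_0. *)

From Pilot Require Import Defs.
From Stdlib Require Import Reals Lra List ClassicalEpsilon Classical
  FunctionalExtensionality PropExtensionality ProofIrrelevance Cantor ZArith Lia.
Open Scope R_scope.

Ltac solve_abs := unfold Rabs in *; repeat match goal with
  | |- context [Rcase_abs ?x] => destruct (Rcase_abs x)
  | H : context [Rcase_abs ?x] |- _ => destruct (Rcase_abs x) end; lra.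

Lemma nat_unbounded (r : R) : exists N : nat, r < INR N.
Proof.
  destruct (archimed r) as [H1 _].
  exists (Z.to_nat (up r)).
  destruct (Z_le_gt_dec 0 (up r)).
  - rewrite INR_IZR_INZ, Z2Nat.id; auto.
  - assert (Hneg : (up r < 0)%Z) by lia. apply IZR_lt in Hneg.
    pose proof (pos_INR (Z.to_nat (up r))). lra.
Qed.

Lemma inv_succ_small (e : R) : 0 < e -> exists m : nat, / (INR m + 1) < e.
Proof.
  intros He. destruct (nat_unbounded (/ e)) as [m Hm]. exists m.
  pose proof (pos_INR m).
  apply Rlt_le_trans with (/ / e); [|rewrite Rinv_inv; lra].
  apply Rinv_lt_contravar; [|lra].
  apply Rmult_lt_0_compat; [apply Rinv_0_lt_compat|]; lra.
Qed.

Lemma inv_succ_pos (m : nat) : 0 < / (INR m + 1).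
Proof. apply Rinv_0_lt_compat. pose proof (pos_INR m). lra. Qed.

Lemma inv_succ_antitone (m k : nat) : (m <= k)%nat -> / (INR k + 1) <= / (INR m + 1).
Proof.
  intros H. apply le_INR in H. pose proof (pos_INR m).
  apply Rinv_le_contravar; lra.
Qed.

Lemma grid_approx (x : R) (m : nat) : exists a b : nat,
  (INR a - INR b) / (INR m + 1) <= x < (INR a - INR b) / (INR m + 1) + / (INR m + 1).
Proof.
  set (N := INR m + 1).
  assert (HN : 0 < N) by (unfold N; pose proof (pos_INR m); lra).
  destruct (archimed (x * N)) as [H1 H2].
  set (z := (up (x * N) - 1)%Z).
  exists (Z.to_nat z), (Z.to_nat (- z)).
  replace (INR (Z.to_nat z) - INR (Z.to_nat (- z))) with (IZR z)
    by (rewrite !INR_IZR_INZ, <- minus_IZR; f_equal; lia).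
  unfold z. rewrite minus_IZR. unfold Rdiv. split.
  - apply Rmult_le_reg_r with N; auto. rewrite Rmult_assoc, Rinv_l; lra.
  - apply Rmult_lt_reg_r with N; auto.
    rewrite Rmult_plus_distr_r, Rmult_assoc, Rinv_l; lra.
Qed.

Definition qenum (n : nat) : R :=
  let (a, p) := Cantor.of_nat n in let (b, c) := Cantor.of_nat p in
  (INR a - INR b) / (INR c + 1).

Lemma qenum_dense (x e : R) : 0 < e -> exists n, Rabs (qenum n - x) < e.
Proof.
  intros He. destruct (inv_succ_small e He) as [m Hm].
  destruct (grid_approx x m) as [a [b [H1 H2]]].
  exists (Cantor.to_nat (a, Cantor.to_nat (b, m))).
  unfold qenum. rewrite !Cantor.cancel_of_to.
  apply Rabs_def1; lra.
Qed.

Lemma qenum_between (a b : R) : a < b -> exists n, a < qenum n < b.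
Proof.
  intros Hab. destruct (qenum_dense ((a + b) / 2) ((b - a) / 2)) as [n Hn]; [lra|].
  exists n. apply Rabs_def2 in Hn. lra.
Qed.

Lemma Inf_is_glb (S : R -> Prop) : (exists x, S x) -> (exists m, forall x, S x -> m <= x) ->
  is_glb S (Inf S).
Proof.
  intros [x Hx] [m Hm]. unfold Inf. apply epsilon_spec.
  destruct (completeness (fun y => S (- y))) as [l [Hl1 Hl2]].
  - exists (- m). intros y Hy. specialize (Hm _ Hy). lra.
  - exists (- x). rewrite Ropp_involutive; auto.
  - exists (- l). split.
    + intros y Hy. assert (- y <= l) by (apply Hl1; rewrite Ropp_involutive; auto). lra.
    + intros m' Hm'. assert (l <= - m'); [|lra].
      apply Hl2. intros y Hy. specialize (Hm' _ Hy). lra.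
Qed.

Section Measurability.
Variables (O : Type) (A : (O -> Prop) -> Prop) (HA : sigma_algebra A).

Lemma meas_ext (P Q : O -> Prop) : (forall w, P w <-> Q w) -> A P -> A Q.
Proof.
  intros H HP. replace Q with P; auto.
  apply functional_extensionality; intro w; apply propositional_extensionality; auto.
Qed.

Lemma meas_compl P : A P -> A (fun w => ~ P w).
Proof. apply HA. Qed.

Lemma meas_union (P : nat -> O -> Prop) :
  (forall n, A (P n)) -> A (fun w => exists n, P n w).
Proof. apply HA. Qed.

Lemma meas_const (P : Prop) : A (fun _ => P).
Proof.
  destruct HA as [Hfull [Hcompl _]].
  destruct (classic P) as [HP|HP].
  - apply (meas_ext (fun _ => True)); [tauto|exact Hfull].
  - apply (meas_ext (fun _ => ~ True)); [tauto|exact (Hcompl _ Hfull)].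
Qed.

Lemma meas_or P Q : A P -> A Q -> A (fun w => P w \/ Q w).
Proof.
  intros HP HQ.
  apply (meas_ext (fun w => exists n, (match n with 0%nat => P | _ => Q end) w)).
  - intro w; split.
    + intros [[|n] H]; auto.
    + intros [H|H]; [exists 0%nat|exists 1%nat]; auto.
  - apply meas_union. intros [|n]; auto.
Qed.

Lemma meas_and P Q : A P -> A Q -> A (fun w => P w /\ Q w).
Proof.
  intros HP HQ. apply (meas_ext (fun w => ~ (~ P w \/ ~ Q w))); [intro w; tauto|].
  apply meas_compl, meas_or; apply meas_compl; auto.
Qed.

Lemma meas_imp P Q : A P -> A Q -> A (fun w => P w -> Q w).
Proof.
  intros HP HQ. apply (meas_ext (fun w => ~ P w \/ Q w)); [intro w; tauto|].
  apply meas_or; auto. apply meas_compl; auto.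
Qed.

Lemma meas_inter (P : nat -> O -> Prop) :
  (forall n, A (P n)) -> A (fun w => forall n, P n w).
Proof.
  intros H. apply (meas_ext (fun w => ~ exists n, ~ P n w)).
  - intro w; split.
    + intros H1 n. apply NNPP; intro H2; apply H1; eauto.
    + intros H1 [n H2]; auto.
  - apply meas_compl, meas_union; intro n; apply meas_compl; auto.
Qed.

(** A real function is Borel iff all its strict sublevel sets are measurable;
    the latter condition is the convenient one to propagate. *)
Definition sublevel_meas (h : O -> R) : Prop := forall c, A (fun w => h w < c).

Lemma sublevel_meas_gt h : sublevel_meas h -> forall c, A (fun w => c < h w).
Proof.
  intros H c.
  apply (meas_ext (fun w => exists k, ~ (h w < c + / (INR k + 1)))).
  - intro w; split.
    + intros [k Hk]. pose proof (inv_succ_pos k). lra.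
    + intros Hw. destruct (inv_succ_small (h w - c)) as [k Hk]; [lra|].
      exists k. lra.
  - apply meas_union; intro k; apply meas_compl, H.
Qed.

Lemma sublevel_meas_le h : sublevel_meas h -> forall c, A (fun w => h w <= c).
Proof.
  intros H c. apply (meas_ext (fun w => ~ (c < h w))); [intro; lra|].
  apply meas_compl, sublevel_meas_gt, H.
Qed.

Lemma borel_sublevel_meas h : borel_fun A h -> sublevel_meas h.
Proof.
  intros H c. apply (H (fun y => y < c)).
  intros S HS HU. apply HU. intros x Hx. exists (c - x). split; [lra|].
  intros y Hy. apply Rabs_def2 in Hy. lra.
Qed.

(** Each open set of R is a countable union of open intervals with rational
    centres and radii 1/(m+1) contained in it. *)
Lemma sublevel_meas_borel h : sublevel_meas h -> borel_fun A h.
Proof.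
  intros H B HB. apply (HB (fun B => A (fun w => B (h w)))).
  - split; [|split].
    + apply meas_const.
    + intros S HS. apply meas_compl; auto.
    + intros S HS. apply meas_union; auto.
  - intros U HU. cbv beta.
    apply (meas_ext (fun w => exists m a b : nat,
      let r := / (INR m + 1) in let q := (INR a - INR b) / (INR m + 1) in
      (forall y, q - r < y < q + r -> U y) /\ (q - r < h w /\ h w < q + r))).
    + intro w; split.
      * intros [m [a [b [Hc Hi]]]]. apply Hc; auto.
      * intros Hw. destruct (HU _ Hw) as [e [He HUe]].
        destruct (inv_succ_small (e / 2)) as [m Hm]; [lra|].
        destruct (grid_approx (h w) m) as [a [b [H1 H2]]].
        pose proof (inv_succ_pos m).
        exists m, a, b. split; [|lra].
        intros y Hy. apply HUe. apply Rabs_def1; lra.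
    + apply meas_union; intro m; apply meas_union; intro a; apply meas_union; intro b.
      apply meas_and; [apply meas_const|].
      apply meas_and; auto. apply sublevel_meas_gt; auto.
Qed.

Lemma sublevel_meas_const (c0 : R) : sublevel_meas (fun _ => c0).
Proof. intro c. apply meas_const. Qed.

Lemma sublevel_meas_plus f g :
  sublevel_meas f -> sublevel_meas g -> sublevel_meas (fun w => f w + g w).
Proof.
  intros Hf Hg c.
  apply (meas_ext (fun w => exists n, f w < qenum n /\ g w < c - qenum n)).
  - intro w; split.
    + intros [n [H1 H2]]; lra.
    + intros Hw. destruct (qenum_between (f w) (c - g w)) as [n Hn]; [lra|].
      exists n. lra.
  - apply meas_union; intro n; apply meas_and; auto.
Qed.

Lemma sublevel_meas_opp f : sublevel_meas f -> sublevel_meas (fun w => - f w).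
Proof.
  intros Hf c. apply (meas_ext (fun w => - c < f w)); [intro; lra|].
  apply sublevel_meas_gt; auto.
Qed.

Lemma sublevel_meas_scal (K : R) f :
  0 <= K -> sublevel_meas f -> sublevel_meas (fun w => K * f w).
Proof.
  intros HK Hf c. destruct (Req_dec K 0) as [->|HK0].
  - apply (meas_ext (fun _ => 0 < c)); [intro; lra|]. apply meas_const.
  - apply (meas_ext (fun w => f w < c / K)); [|apply Hf].
    intro w. replace (K * f w) with (K * (f w - c / K) + c) by (field; lra).
    split; intro H; [|nra].
    assert (f w - c / K < 0); [|nra].
    apply Rnot_le_lt; intro Hn. nra.
Qed.

Lemma sublevel_meas_min f g :
  sublevel_meas f -> sublevel_meas g -> sublevel_meas (fun w => Rmin (f w) (g w)).
Proof.
  intros Hf Hg c. apply (meas_ext (fun w => f w < c \/ g w < c)).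
  - intro w; unfold Rmin; destruct (Rle_dec (f w) (g w)); split; intro; lra.
  - apply meas_or; auto.
Qed.

Lemma sublevel_meas_abs f : sublevel_meas f -> sublevel_meas (fun w => Rabs (f w)).
Proof.
  intros Hf c. apply (meas_ext (fun w => f w < c /\ - c < f w)).
  - intro w; split; intro H; [apply Rabs_def1; tauto|apply Rabs_def2 in H; auto].
  - apply meas_and; auto. apply sublevel_meas_gt; auto.
Qed.

End Measurability.

Arguments meas_ext {O A}.
Arguments meas_compl {O A}.
Arguments meas_union {O A}.
Arguments meas_const {O A}.
Arguments meas_or {O A}.
Arguments meas_and {O A}.
Arguments meas_imp {O A}.
Arguments meas_inter {O A}.
Arguments sublevel_meas {O} A h.
Arguments sublevel_meas_gt {O A}.
Arguments sublevel_meas_le {O A}.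
Arguments borel_sublevel_meas {O A}.
Arguments sublevel_meas_borel {O A}.
Arguments sublevel_meas_const {O A}.
Arguments sublevel_meas_plus {O A}.
Arguments sublevel_meas_opp {O A}.
Arguments sublevel_meas_scal {O A}.
Arguments sublevel_meas_min {O A}.
Arguments sublevel_meas_abs {O A}.

Section MetricFacts.
Variable X : MetricSpace.

Lemma dist_refl (x : X) : mdist X x x = 0.
Proof. destruct (dist_metric X) as [H _]. apply H; auto. Qed.

Lemma dist_sym (x y : X) : mdist X x y = mdist X y x.
Proof. destruct (dist_metric X) as [_ [H _]]. apply H. Qed.

Lemma dist_triangle (x y z : X) : mdist X x z <= mdist X x y + mdist X y z.
Proof. destruct (dist_metric X) as [_ [_ H]]. apply H. Qed.

Lemma dist_nonneg (x y : X) : 0 <= mdist X x y.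
Proof. pose proof (dist_triangle x y x). rewrite dist_refl, (dist_sym y x) in H. lra. Qed.

Lemma dist_lipschitz (a y z : X) : Rabs (mdist X a y - mdist X a z) <= mdist X y z.
Proof.
  pose proof (dist_triangle a y z). pose proof (dist_triangle a z y).
  rewrite (dist_sym z y) in H0. apply Rabs_le; lra.
Qed.

Lemma continuous_const (c : R) : continuous (fun _ : X => c).
Proof. intros x e He. exists 1. split; [lra|]. intros. rewrite Rminus_diag, Rabs_R0; auto. Qed.

Lemma continuous_minus (f g : X -> R) :
  continuous f -> continuous g -> continuous (fun z => f z - g z).
Proof.
  intros Hf Hg z e He.
  destruct (Hf z (e / 2)) as [d1 [Hd1 H1]]; [lra|].
  destruct (Hg z (e / 2)) as [d2 [Hd2 H2]]; [lra|].
  exists (Rmin d1 d2). split; [apply Rmin_glb_lt; auto|].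
  intros y Hy. pose proof (Rmin_l d1 d2). pose proof (Rmin_r d1 d2).
  specialize (H1 y ltac:(lra)). specialize (H2 y ltac:(lra)). solve_abs.
Qed.

Lemma list_nat_bound (l : list nat) : exists N, forall k, In k l -> (k <= N)%nat.
Proof.
  induction l as [|a l [N HN]].
  - exists 0%nat; intros k [].
  - exists (Nat.max a N). intros k [->|Hk]; [lia|]. specialize (HN k Hk). lia.
Qed.

(** A continuous function is bounded on a compact set: cover it by the open
    sets {|g| < k}. *)
Lemma continuous_bounded (g : X -> R) (K : X -> Prop) : continuous g -> Defs.compact K ->
  exists M, 0 <= M /\ forall z, K z -> Rabs (g z) <= M.
Proof.
  intros Hg HK.
  destruct (HK nat (fun k z => Rabs (g z) < INR k)) as [l Hl].
  - intros k z Hz. destruct (Hg z (INR k - Rabs (g z))) as [dl [Hdl Hy]]; [lra|].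
    exists dl. split; auto. intros y Hyz. specialize (Hy y Hyz).
    pose proof (Rabs_triang_inv (g y) (g z)). lra.
  - intros z _. apply nat_unbounded.
  - destruct (list_nat_bound l) as [N HN]. exists (INR N). split; [apply pos_INR|].
    intros z Hz. destruct (Hl z Hz) as [k [Hk1 Hk2]].
    pose proof (le_INR _ _ (HN k Hk1)). lra.
Qed.

Lemma list_half_min (l : list (X * R)) :
  exists d, 0 < d /\ forall p, In p l -> 0 < snd p -> d <= snd p / 2.
Proof.
  induction l as [|p l [d [Hd H]]].
  - exists 1. split; [lra|]. intros p [].
  - destruct (Rlt_dec 0 (snd p)).
    + exists (Rmin d (snd p / 2)). split; [apply Rmin_glb_lt; lra|].
      intros q [->|Hq] Hq0; [apply Rmin_r|]. eapply Rle_trans; [apply Rmin_l|auto].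
    + exists d. split; auto. intros q [->|Hq] Hq0; [lra|auto].
Qed.

(** Heine's theorem: a continuous function is uniformly continuous around a
    compact set (Lebesgue-number argument on a finite subcover). *)
Lemma uniformly_continuous (g : X -> R) (C : X -> Prop) (e : R) :
  continuous g -> Defs.compact C -> 0 < e ->
  exists dl, 0 < dl /\ forall y z, C y -> mdist X y z < dl -> Rabs (g y - g z) < e.
Proof.
  intros Hg HC He.
  destruct (HC (X * R)%type (fun p z => 0 < snd p /\ C (fst p) /\
      mdist X (fst p) z < snd p / 2 /\
      forall z', mdist X (fst p) z' < snd p -> Rabs (g z' - g (fst p)) < e / 2)) as [l Hl].
  - intros [a r] z [H1 [H2 [H3 H4]]]; simpl in *. exists (r / 2 - mdist X a z).
    split; [lra|]. intros y Hy. unfold open_ball in Hy. repeat split; auto.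
    pose proof (dist_triangle a z y). lra.
  - intros y Hy. destruct (Hg y (e / 2)) as [dl [Hdl H]]; [lra|].
    exists (y, dl); simpl. rewrite dist_refl. repeat split; auto. lra.
  - destruct (list_half_min l) as [d [Hd Hdl]]. exists d. split; auto.
    intros y z Hy Hyz. destruct (Hl y Hy) as [[a r] [Hin [H1 [H2 [H3 H4]]]]]; simpl in *.
    specialize (Hdl _ Hin H1); simpl in Hdl.
    pose proof (dist_triangle a y z).
    pose proof (H4 y ltac:(lra)). pose proof (H4 z ltac:(lra)). solve_abs.
Qed.

Lemma dense_bound (t : nat -> X) (Hd : forall x e, 0 < e -> exists n, mdist X (t n) x < e)
  (h : X -> R) (Hh : continuous h) (x0 : X) (r b : R) :
  (forall n, mdist X x0 (t n) < r -> Rabs (h (t n)) <= b) ->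
  forall x, mdist X x0 x < r -> Rabs (h x) <= b.
Proof.
  intros H x Hx. apply Rnot_lt_le. intro Hb.
  destruct (Hh x (Rabs (h x) - b)) as [dl [Hdl Hc]]; [lra|].
  destruct (Hd x (Rmin dl (r - mdist X x0 x))) as [n Hn]; [apply Rmin_glb_lt; lra|].
  pose proof (Rmin_l dl (r - mdist X x0 x)). pose proof (Rmin_r dl (r - mdist X x0 x)).
  rewrite dist_sym in Hn.
  specialize (Hc (t n) ltac:(lra)).
  pose proof (dist_triangle x0 x (t n)).
  specialize (H n ltac:(lra)).
  pose proof (Rabs_triang_inv (h x) (h (t n))). rewrite Rabs_minus_sym in Hc. lra.
Qed.

End MetricFacts.

(** * The metric delta on C(X) *)

Section DeltaMetric.
Variables (X : MetricSpace) (x0 : X).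
Hypothesis Hproper : proper X.

Definition delta_witness (f g : Cfun X) (e : R) : Prop := 0 < e /\
  exists eta, eta < e /\ forall x, open_ball x0 (/ e) x ->
    Rabs (Cfun_app f x - Cfun_app g x) <= eta.

Lemma delta_witness_exists f g : exists e, delta_witness f g e.
Proof.
  assert (Hc : continuous (fun z => Cfun_app f z - Cfun_app g z))
    by (apply continuous_minus; [exact (proj2_sig f)|exact (proj2_sig g)]).
  destruct (continuous_bounded X _ _ Hc (Hproper x0 1)) as [M [HM HMb]].
  exists (M + 1). split; [lra|]. exists M. split; [lra|].
  intros x Hx. apply HMb. unfold closed_ball, open_ball in *.
  assert (/ (M + 1) <= 1) by (rewrite <- Rinv_1; apply Rinv_le_contravar; lra). lra.
Qed.

Lemma delta_is_glb f g : is_glb (delta_witness f g) (delta x0 f g).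
Proof.
  apply Inf_is_glb; [apply delta_witness_exists|].
  exists 0. intros x [Hx _]. lra.
Qed.

Lemma delta_nonneg f g : 0 <= delta x0 f g.
Proof. apply (proj2 (delta_is_glb f g)). intros x [Hx _]; lra. Qed.

Lemma delta_le_witness f g e : delta_witness f g e -> delta x0 f g <= e.
Proof. apply (proj1 (delta_is_glb f g)). Qed.

Lemma delta_lt_witness f g c : delta x0 f g < c -> exists e, delta_witness f g e /\ e < c.
Proof.
  intros H. apply NNPP. intro Hn.
  assert (c <= delta x0 f g); [|lra].
  apply (proj2 (delta_is_glb f g)). intros x Hx.
  apply Rnot_lt_le. intro Hxc. apply Hn; eauto.
Qed.

Lemma delta_lt_close f g c : delta x0 f g < c -> forall x, mdist X x0 x < / c ->
  Rabs (Cfun_app f x - Cfun_app g x) < c.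
Proof.
  intros H x Hx. destruct (delta_lt_witness _ _ _ H) as [e [[He [eta [H1 H2]]] Hec]].
  enough (Rabs (Cfun_app f x - Cfun_app g x) <= eta) by lra.
  apply H2. unfold open_ball.
  apply Rlt_trans with (/ c); auto. apply Rinv_lt_contravar; auto. nra.
Qed.

Lemma delta_zero f g : delta x0 f g = 0 <-> f = g.
Proof.
  split.
  - intros H0.
    assert (Hpt : forall x, Cfun_app f x = Cfun_app g x).
    { intro x. apply NNPP. intro Hne.
      assert (Ha : 0 < Rabs (Cfun_app f x - Cfun_app g x)) by (apply Rabs_pos_lt; lra).
      pose proof (dist_nonneg X x0 x).
      set (c := Rmin (Rabs (Cfun_app f x - Cfun_app g x)) (/ (mdist X x0 x + 1))).
      assert (Hc0 : 0 < c) by (apply Rmin_glb_lt; auto; apply Rinv_0_lt_compat; lra).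
      assert (Hcl : c <= Rabs (Cfun_app f x - Cfun_app g x)) by apply Rmin_l.
      assert (Hcr : c <= / (mdist X x0 x + 1)) by apply Rmin_r.
      assert (Hx : mdist X x0 x < / c).
      { apply Rlt_le_trans with (mdist X x0 x + 1); [lra|].
        rewrite <- (Rinv_inv (mdist X x0 x + 1)). apply Rinv_le_contravar; auto. }
      pose proof (delta_lt_close f g c ltac:(lra) x Hx). lra. }
    destruct f as [f Hf], g as [g Hg]. unfold Cfun_app in Hpt; simpl in Hpt.
    assert (f = g) by (apply functional_extensionality; auto).
    subst g. f_equal. apply proof_irrelevance.
  - intros ->. apply Rle_antisym; [|apply delta_nonneg].
    apply Rnot_lt_le. intro Hlt.
    assert (Hw : delta_witness g g (delta x0 g g / 2)).
    { split; [lra|]. exists 0. split; [lra|].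
      intros x _. rewrite Rminus_diag, Rabs_R0; lra. }
    pose proof (delta_le_witness _ _ _ Hw). lra.
Qed.

Lemma delta_sym f g : delta x0 f g = delta x0 g f.
Proof.
  unfold delta. f_equal.
  apply functional_extensionality; intro e; apply propositional_extensionality.
  split; intros [H1 [eta [H2 H3]]]; split; auto; exists eta; split; auto;
    intros x Hx; rewrite Rabs_minus_sym; auto.
Qed.

Lemma delta_witness_triangle f g h e1 e2 :
  delta_witness f g e1 -> delta_witness g h e2 -> delta_witness f h (e1 + e2).
Proof.
  intros [He1 [eta1 [H11 H12]]] [He2 [eta2 [H21 H22]]].
  split; [lra|]. exists (eta1 + eta2). split; [lra|]. intros x Hx.
  unfold open_ball in *.
  assert (/ (e1 + e2) <= / e1) by (apply Rinv_le_contravar; lra).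
  assert (/ (e1 + e2) <= / e2) by (apply Rinv_le_contravar; lra).
  specialize (H12 x ltac:(lra)). specialize (H22 x ltac:(lra)).
  pose proof (Rabs_triang (Cfun_app f x - Cfun_app g x) (Cfun_app g x - Cfun_app h x)).
  replace (Cfun_app f x - Cfun_app g x + (Cfun_app g x - Cfun_app h x))
    with (Cfun_app f x - Cfun_app h x) in * by ring. lra.
Qed.

Lemma delta_triangle f g h : delta x0 f h <= delta x0 f g + delta x0 g h.
Proof.
  apply Rnot_lt_le. intro Hlt.
  set (eps := (delta x0 f h - delta x0 f g - delta x0 g h) / 2).
  destruct (delta_lt_witness f g (delta x0 f g + eps)) as [e1 [Hw1 He1]]; [unfold eps; lra|].
  destruct (delta_lt_witness g h (delta x0 g h + eps)) as [e2 [Hw2 He2]]; [unfold eps; lra|].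
  pose proof (delta_le_witness _ _ _ (delta_witness_triangle _ _ _ _ _ Hw1 Hw2)).
  unfold eps in *. lra.
Qed.

Lemma delta_is_metric : is_metric (delta x0).
Proof. split; [exact delta_zero|split; [exact delta_sym|exact delta_triangle]]. Qed.

End DeltaMetric.

(** * Approximation by cone functions *)

Lemma finite_choice (P : nat -> nat -> Prop) (ln : list nat) :
  (forall n, In n ln -> exists j, P n j) ->
  exists l, (forall n, In n ln -> exists j, In (n, j) l) /\
            (forall p, In p l -> P (fst p) (snd p)).
Proof.
  induction ln as [|n ln IH]; intros H.
  - exists nil. split; intros ? [].
  - destruct IH as [l [H1 H2]]; [intros; apply H; simpl; auto|].
    destruct (H n) as [j Hj]; [simpl; auto|].
    exists ((n, j) :: l). split.
    + intros m [->|Hm]; [exists j; simpl; auto|].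
      destruct (H1 m Hm) as [j' Hj']. exists j'; simpl; auto.
    + intros p [<-|Hp]; simpl; auto.
Qed.

Lemma fine_step (dl eps : R) (k : nat) : 0 < dl -> 0 < eps ->
  exists d, 0 < d /\ d <= dl /\ d <= 1 /\ INR k * d < eps.
Proof.
  intros Hdl He. pose proof (pos_INR k).
  exists (Rmin dl (Rmin 1 (eps / (INR k + 1)))).
  pose proof (Rmin_l dl (Rmin 1 (eps / (INR k + 1)))).
  pose proof (Rmin_r dl (Rmin 1 (eps / (INR k + 1)))).
  pose proof (Rmin_l 1 (eps / (INR k + 1))). pose proof (Rmin_r 1 (eps / (INR k + 1))).
  assert (Hq : 0 < eps / (INR k + 1)) by (apply Rdiv_lt_0_compat; lra).
  assert (Hkq : INR k * (eps / (INR k + 1)) < eps).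
  { replace (INR k * (eps / (INR k + 1))) with (eps - eps / (INR k + 1)) by (field; lra). lra. }
  repeat split; try lra.
  - apply Rmin_glb_lt; [lra|apply Rmin_glb_lt; lra].
  - apply Rle_lt_trans with (INR k * (eps / (INR k + 1))); [|lra].
    apply Rmult_le_compat_l; lra.
Qed.

Section Cones.
Variable X : MetricSpace.

Definition cone_min (t : nat -> X) (k c : nat) (l : list (nat * nat)) (z : X) : R :=
  fold_right (fun p acc => Rmin (qenum (snd p) + INR k * mdist X (t (fst p)) z) acc)
    (qenum c) l.

Lemma cone_min_lipschitz t k c l y z :
  Rabs (cone_min t k c l y - cone_min t k c l z) <= INR k * mdist X y z.
Proof.
  pose proof (pos_INR k) as Hk.
  induction l as [|p l IH]; simpl.
  - rewrite Rminus_diag, Rabs_R0. pose proof (dist_nonneg X y z). nra.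
  - pose proof (dist_lipschitz X (t (fst p)) y z) as Hd.
    assert (Hd' : Rabs (INR k * mdist X (t (fst p)) y - INR k * mdist X (t (fst p)) z)
                  <= INR k * mdist X y z).
    { rewrite <- Rmult_minus_distr_l, Rabs_mult, (Rabs_pos_eq (INR k)); auto.
      apply Rmult_le_compat_l; auto. }
    revert IH Hd'. generalize (cone_min t k c l y) (cone_min t k c l z).
    generalize (INR k * mdist X (t (fst p)) y) (INR k * mdist X (t (fst p)) z).
    intros a b u v H1 H2. unfold Rmin.
    destruct (Rle_dec _ _); destruct (Rle_dec _ _); solve_abs.
Qed.

Lemma cone_min_continuous t k c l : continuous (cone_min t k c l).
Proof.
  intros x e He. pose proof (pos_INR k).
  exists (e / (INR k + 1)). split; [apply Rdiv_lt_0_compat; lra|].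
  intros y Hy. pose proof (cone_min_lipschitz t k c l y x) as Hl. rewrite dist_sym in Hl.
  apply Rle_lt_trans with (INR k * mdist X x y); auto.
  apply Rle_lt_trans with (INR k * (e / (INR k + 1))); [apply Rmult_le_compat_l; lra|].
  replace (INR k * (e / (INR k + 1))) with (e - e / (INR k + 1)) by (field; lra).
  assert (0 < e / (INR k + 1)) by (apply Rdiv_lt_0_compat; lra). lra.
Qed.

Lemma cone_min_le_entry t k c l z p : In p l ->
  cone_min t k c l z <= qenum (snd p) + INR k * mdist X (t (fst p)) z.
Proof.
  induction l as [|q l IH]; simpl; [tauto|].
  intros [->|Hp]; [apply Rmin_l|]. eapply Rle_trans; [apply Rmin_r|auto].
Qed.

Lemma cone_min_ge t k c l z v : v <= qenum c ->
  (forall p, In p l -> v <= qenum (snd p) + INR k * mdist X (t (fst p)) z) ->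
  v <= cone_min t k c l z.
Proof.
  intros H0 H. induction l as [|q l IH]; simpl; auto.
  apply Rmin_glb; [apply H; simpl; auto|]. apply IH. intros; apply H; simpl; auto.
Qed.

Lemma cone_above (g : X -> R) (C : X -> Prop) (M eps dl : R) (k : nat) :
  0 < eps ->
  (forall z, C z -> Rabs (g z) <= M) ->
  (forall y z, C y -> mdist X y z < dl -> Rabs (g y - g z) < eps) ->
  2 * M + 2 * eps < INR k * dl ->
  forall p q z, C z -> (C p -> Rabs (q - g p) < eps) -> (~ C p -> M <= q) ->
    g z - 2 * eps <= q + INR k * mdist X p z.
Proof.
  intros He HM Hu Hk p q z Hz Hnear Hfar.
  pose proof (HM z Hz). pose proof (dist_nonneg X p z). pose proof (pos_INR k).
  assert (0 <= INR k * mdist X p z) by nra.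
  destruct (classic (C p)) as [Hp|Hp].
  - specialize (Hnear Hp). pose proof (HM p Hp).
    destruct (Rlt_dec (mdist X p z) dl) as [Hlt|Hge].
    + pose proof (Hu _ _ Hp Hlt). solve_abs.
    + assert (INR k * dl <= INR k * mdist X p z) by (apply Rmult_le_compat_l; lra).
      solve_abs.
  - specialize (Hfar Hp). solve_abs.
Qed.

Lemma cone_below (g : X -> R) (C : X -> Prop) (eps dl d : R) (k : nat) :
  (forall y z, C y -> mdist X y z < dl -> Rabs (g y - g z) < eps) ->
  d <= dl -> INR k * d < eps ->
  forall p q z, C p -> Rabs (q - g p) < eps -> mdist X p z < d ->
    q + INR k * mdist X p z <= g z + 3 * eps.
Proof.
  intros Hu Hd Hkd p q z Hp Hq Hpz.
  pose proof (Hu p z Hp ltac:(lra)).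
  assert (INR k * mdist X p z <= INR k * d) by (apply Rmult_le_compat_l; [apply pos_INR|lra]).
  solve_abs.
Qed.

Section Approximation.
Hypothesis Hproper : proper X.
Variables (x0 : X) (t : nat -> X).
Hypothesis Hdense : forall x e, 0 < e -> exists n, mdist X (t n) x < e.

Lemma cone_approx (g : X -> R) (r eps : R) : continuous g -> 0 < r -> 0 < eps ->
  exists k c l, forall z, mdist X x0 z < r -> Rabs (cone_min t k c l z - g z) <= 3 * eps.
Proof.
  intros Hg Hr He.
  set (C := closed_ball x0 (r + 1)).
  destruct (continuous_bounded X g C Hg (Hproper x0 (r + 1))) as [M [HM HMb]].
  destruct (uniformly_continuous X g C eps Hg (Hproper x0 (r + 1)) He) as [dl [Hdl Hu]].
  destruct (nat_unbounded ((2 * M + 2 * eps) / dl)) as [k Hk].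
  assert (Hkdl : 2 * M + 2 * eps < INR k * dl).
  { apply Rmult_lt_compat_r with (r := dl) in Hk; auto.
    unfold Rdiv in Hk. rewrite Rmult_assoc, Rinv_l in Hk; lra. }
  destruct (fine_step dl eps k Hdl He) as [d [Hd0 [Hd1 [Hd2 Hd3]]]].
  (* finitely many t_n are d-dense in the closed ball of radius r *)
  destruct (Hproper x0 r nat (fun n z => mdist X (t n) z < d)) as [ln Hln].
  { intros n z Hz. exists (d - mdist X (t n) z). split; [lra|].
    intros y Hy. unfold open_ball in Hy. pose proof (dist_triangle X (t n) z y). lra. }
  { intros z _. apply Hdense; auto. }
  destruct (finite_choice (fun n j => (C (t n) -> Rabs (qenum j - g (t n)) < eps) /\
                                      (~ C (t n) -> M <= qenum j)) ln) as [l [Hl1 Hl2]].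
  { intros n _. destruct (classic (C (t n))) as [Hc|Hc].
    - destruct (qenum_dense (g (t n)) eps He) as [j Hj]. exists j. tauto.
    - destruct (qenum_dense (M + eps) eps He) as [j Hj]. exists j.
      split; [tauto|]. intros _. solve_abs. }
  destruct (qenum_dense (M + eps) eps He) as [c Hc].
  exists k, c, l. intros z Hz.
  assert (HzC : C z) by (unfold C, closed_ball; lra).
  pose proof (HMb z HzC).
  apply Rabs_le. split.
  - enough (g z - 2 * eps <= cone_min t k c l z) by lra.
    apply cone_min_ge; [solve_abs|].
    intros [n j] Hp. destruct (Hl2 _ Hp) as [Hnear Hfar].
    exact (cone_above g C M eps dl k He HMb Hu Hkdl (t n) (qenum j) z HzC Hnear Hfar).
  - destruct (Hln z ltac:(unfold closed_ball; lra)) as [n [Hn Hnz]].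
    destruct (Hl1 n Hn) as [j Hj].
    pose proof (cone_min_le_entry t k c l z (n, j) Hj) as Hm. simpl in Hm.
    assert (Hc' : C (t n)).
    { unfold C, closed_ball. pose proof (dist_triangle X x0 z (t n)).
      rewrite (dist_sym X z (t n)) in *. lra. }
    pose proof (proj1 (Hl2 _ Hj) Hc') as Hq; simpl in Hq.
    pose proof (cone_below g C eps dl d k Hu Hd1 Hd3 (t n) (qenum j) z Hc' Hq Hnz). lra.
Qed.

End Approximation.
End Cones.

Section Normalization.
Variables (X : MetricSpace) (x0 : X).
Hypothesis Hproper : proper X.

Definition Cfun_normalize (f : Cfun X) : Cfun X :=
  exist _ (fun z => Cfun_app f z - Cfun_app f x0)
    (continuous_minus X _ _ (proj2_sig f) (continuous_const X (Cfun_app f x0))).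

Lemma delta_normalize (f g : Cfun X) :
  Cfun_app g x0 = 0 -> delta x0 (Cfun_normalize f) g <= 2 * delta x0 f g.
Proof.
  intros Hg0. apply Rnot_lt_le. intro Hlt.
  destruct (delta_lt_witness X x0 Hproper f g (delta x0 (Cfun_normalize f) g / 2))
    as [e [[He [eta [Heta Hb]]] Hec]]; [lra|].
  enough (delta x0 (Cfun_normalize f) g <= 2 * e) by lra.
  apply delta_le_witness; auto.
  split; [lra|]. exists (2 * eta). split; [lra|]. intros x Hx.
  unfold open_ball in *. simpl.
  assert (/ (2 * e) <= / e) by (apply Rinv_le_contravar; lra).
  pose proof (Hb x ltac:(lra)).
  pose proof (Hb x0 ltac:(rewrite dist_refl; apply Rinv_0_lt_compat; auto)).
  rewrite Hg0 in *. solve_abs.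
Qed.

End Normalization.

(** Decoding natural numbers into lists of pairs, with [fuel] bounding the length. *)
Fixpoint decode_pairs (fuel m : nat) : list (nat * nat) :=
  match fuel, m with
  | S f, S x => Cantor.of_nat (fst (Cantor.of_nat x)) :: decode_pairs f (snd (Cantor.of_nat x))
  | _, _ => nil
  end.

Definition decode_list (q : nat) : list (nat * nat) :=
  decode_pairs (fst (Cantor.of_nat q)) (snd (Cantor.of_nat q)).

Lemma decode_list_surj (l : list (nat * nat)) : exists q, decode_list q = l.
Proof.
  unfold decode_list.
  induction l as [|h l [q Hq]].
  - exists (Cantor.to_nat (0, 0)%nat). rewrite Cantor.cancel_of_to. reflexivity.
  - destruct (Cantor.of_nat q) as [f m] eqn:E. simpl in Hq.
    exists (Cantor.to_nat (S f, S (Cantor.to_nat (Cantor.to_nat h, m)))).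
    rewrite Cantor.cancel_of_to. cbn [decode_pairs fst snd].
    rewrite !Cantor.cancel_of_to. cbn [fst snd]. rewrite Cantor.cancel_of_to. congruence.
Qed.

(** The slope, the default height and the list of a cone coded by n. *)
Definition decode_cone (n : nat) : nat * nat * list (nat * nat) :=
  (fst (Cantor.of_nat n), fst (Cantor.of_nat (snd (Cantor.of_nat n))),
   decode_list (snd (Cantor.of_nat (snd (Cantor.of_nat n))))).

Lemma decode_cone_surj k c l : exists n, decode_cone n = (k, c, l).
Proof.
  destruct (decode_list_surj l) as [q Hq].
  exists (Cantor.to_nat (k, Cantor.to_nat (c, q))).
  unfold decode_cone. rewrite !Cantor.cancel_of_to. cbn [fst snd].
  rewrite !Cantor.cancel_of_to. cbn [fst snd]. congruence.
Qed.

Lemma countable_dense_sequence (O : Type) (T : O -> Type) (d : forall w, T w -> T w -> R)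
  (L : section T -> Prop) (x0 : section T) (Hx0 : L x0) (D : section T -> Prop) :
  countable_set D -> (forall s, D s -> L s) ->
  (forall w (x : T w) e, 0 < e -> exists s, D s /\ d w (s w) x < e) ->
  exists s : nat -> section T, (forall n, L (s n)) /\
    forall w x e, 0 < e -> exists n, d w (s n w) x < e.
Proof.
  intros [code Hcode] HDL HDd.
  set (P := fun n (t : section T) =>
              (D t /\ code t = n) \/ (~ (exists t, D t /\ code t = n) /\ t = x0)).
  assert (HP : forall n, P n (epsilon (inhabits x0) (P n))).
  { intro n. apply epsilon_spec.
    destruct (classic (exists t, D t /\ code t = n)) as [[t Ht]|Hn].
    - exists t; left; auto.
    - exists x0; right; auto. }
  exists (fun n => epsilon (inhabits x0) (P n)). split.
  - intro n. destruct (HP n) as [[H1 _]|[_ ->]]; auto.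
  - intros w x e He. destruct (HDd w x e He) as [t [Ht Htd]].
    exists (code t). destruct (HP (code t)) as [[H1 H2]|[H1 _]].
    + rewrite (Hcode _ _ H1 Ht H2). auto.
    + exfalso; apply H1; eauto.
Qed.

(** * The Borel structure on the field of continuous functions *)

Section CFunctionField.
Variables (O : Type) (A : (O -> Prop) -> Prop) (HA : sigma_algebra A).
Variables (X : O -> MetricSpace) (Hproper : forall w, proper (X w)).
Variable L : section (fun w => carrier (X w)) -> Prop.
Hypothesis HLdist : forall x y, L x -> L y -> borel_fun A (fun w => mdist (X w) (x w) (y w)).
Variable x0 : section (fun w => carrier (X w)).
Hypothesis Hx0 : L x0.
Variable s : nat -> section (fun w => carrier (X w)).
Hypothesis HsL : forall n, L (s n).
Hypothesis Hsdense : forall w x e, 0 < e -> exists n, mdist (X w) (s n w) x < e.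

Definition borel_Csection (f : section (fun w => Cfun (X w))) : Prop :=
  forall x : section (fun w => carrier (X w)), L x -> borel_fun A (fun w => Cfun_app (f w) (x w)).

Definition cone_section (k c : nat) (l : list (nat * nat)) : section (fun w => Cfun (X w)) :=
  fun w => exist _ (cone_min (X w) (fun i => s i w) k c l)
                   (cone_min_continuous (X w) (fun i => s i w) k c l).

Definition cone_family (n : nat) : section (fun w => Cfun (X w)) :=
  let '(k, c, l) := decode_cone n in cone_section k c l.

Lemma cone_family_surj k c l : exists n, cone_family n = cone_section k c l.
Proof.
  destruct (decode_cone_surj k c l) as [n Hn]. exists n. unfold cone_family. rewrite Hn. reflexivity.
Qed.

Lemma cone_family_borel n : borel_Csection (cone_family n).
Proof.
  unfold cone_family. destruct (decode_cone n) as [[k c] l].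
  intros x Hx. apply (sublevel_meas_borel HA). unfold cone_section, Cfun_app; simpl.
  induction l as [|p l IH]; unfold cone_min in *; simpl.
  - apply (sublevel_meas_const HA).
  - apply (sublevel_meas_min HA); auto.
    apply (sublevel_meas_plus HA); [apply (sublevel_meas_const HA)|].
    apply (sublevel_meas_scal HA); [apply pos_INR|].
    apply borel_sublevel_meas, HLdist; auto.
Qed.

Lemma cone_family_dense w (g : Cfun (X w)) e :
  0 < e -> exists n, delta (x0 w) (cone_family n w) g < e.
Proof.
  intros He.
  destruct (cone_approx (X w) (Hproper w) (x0 w) (fun i => s i w) (Hsdense w)
              (Cfun_app g) (2 / e) (e / 8)) as [k [c [l Hkcl]]];
    [exact (proj2_sig g)|apply Rdiv_lt_0_compat; lra|lra|].
  destruct (cone_family_surj k c l) as [n Hn]. exists n. rewrite Hn.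
  apply Rle_lt_trans with (e / 2); [|lra].
  apply delta_le_witness; auto.
  split; [lra|]. exists (3 * (e / 8)). split; [lra|].
  intros x Hx. unfold open_ball in Hx. apply Hkcl.
  replace (2 / e) with (/ (e / 2)) by (field; lra). auto.
Qed.

(** delta(f, g) < c iff there are rationals q' < q < c such that |f - g| <= q'
    on all the points s_n of the ball of radius 1/q. *)
Lemma delta_borel f g :
  borel_Csection f -> borel_Csection g -> borel_fun A (fun w => delta (x0 w) (f w) (g w)).
Proof.
  intros Hf Hg. apply (sublevel_meas_borel HA). intro c.
  apply (meas_ext (fun w => exists i j : nat, (qenum j < qenum i /\ qenum i < c /\ 0 < qenum i) /\
     forall n, mdist (X w) (x0 w) (s n w) < / qenum i ->
       Rabs (Cfun_app (f w) (s n w) - Cfun_app (g w) (s n w)) <= qenum j)).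
  - intro w; split.
    + intros [i [j [[H1 [H2 H3]] H4]]].
      apply Rle_lt_trans with (qenum i); auto. apply delta_le_witness; auto.
      split; auto. exists (qenum j). split; auto.
      apply (dense_bound (X w) (fun n => s n w) (Hsdense w)); auto.
      apply continuous_minus; [exact (proj2_sig (f w))|exact (proj2_sig (g w))].
    + intros Hw.
      destruct (delta_lt_witness (X w) (x0 w) (Hproper w) _ _ _ Hw)
        as [e [[He [eta [H1 H2]]] Hec]].
      destruct (qenum_between e c Hec) as [i Hi].
      destruct (qenum_between eta e H1) as [j Hj].
      exists i, j. split; [lra|]. intros n Hn.
      apply Rle_trans with eta; [|lra]. apply H2. unfold open_ball.
      apply Rlt_le_trans with (/ qenum i); auto. apply Rinv_le_contravar; lra.
  - apply (meas_union HA); intro i; apply (meas_union HA); intro j.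
    apply (meas_and HA); [apply (meas_const HA)|].
    apply (meas_inter HA); intro n. apply (meas_imp HA).
    + apply borel_sublevel_meas; auto.
    + apply (sublevel_meas_le HA), (sublevel_meas_abs HA), (sublevel_meas_plus HA);
        [|apply (sublevel_meas_opp HA)]; apply borel_sublevel_meas; auto.
Qed.

(** Maximality: y(x) < c iff, for some k, some cone F_m is within 1/(k+1) of y,
    satisfies F_m(x) < c - 2/(k+1), and x lies in the ball of radius k+1. *)
Lemma borel_Csection_maximal (y : section (fun w => Cfun (X w))) :
  (forall f, borel_Csection f -> borel_fun A (fun w => delta (x0 w) (f w) (y w))) ->
  borel_Csection y.
Proof.
  intros Hy x Hx. apply (sublevel_meas_borel HA). intro c.
  apply (meas_ext (fun w => exists k m : nat,
     delta (x0 w) (cone_family m w) (y w) < / (INR k + 1) /\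
     Cfun_app (cone_family m w) (x w) < c - 2 * / (INR k + 1) /\
     mdist (X w) (x0 w) (x w) < INR k + 1)).
  - intro w; split.
    + intros [k [m [H1 [H2 H3]]]].
      pose proof (pos_INR k). pose proof (inv_succ_pos k).
      assert (Hx' : mdist (X w) (x0 w) (x w) < / / (INR k + 1)) by (rewrite Rinv_inv; auto).
      pose proof (delta_lt_close (X w) (x0 w) (Hproper w) _ _ _ H1 _ Hx'). solve_abs.
    + intros Hw.
      destruct (inv_succ_small ((c - Cfun_app (y w) (x w)) / 3)) as [m1 Hm1]; [lra|].
      destruct (nat_unbounded (mdist (X w) (x0 w) (x w))) as [m2 Hm2].
      set (k := Nat.max m1 m2).
      pose proof (inv_succ_antitone m1 k ltac:(lia)).
      assert (INR m2 <= INR k) by (apply le_INR; lia).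
      destruct (cone_family_dense w (y w) (/ (INR k + 1)) (inv_succ_pos k)) as [m Hm].
      exists k, m. split; auto. split; [|lra].
      assert (Hx' : mdist (X w) (x0 w) (x w) < / / (INR k + 1)) by (rewrite Rinv_inv; lra).
      pose proof (delta_lt_close (X w) (x0 w) (Hproper w) _ _ _ Hm _ Hx'). solve_abs.
  - apply (meas_union HA); intro k; apply (meas_union HA); intro m.
    apply (meas_and HA); [apply borel_sublevel_meas, Hy, cone_family_borel|].
    apply (meas_and HA); apply borel_sublevel_meas; [apply cone_family_borel|]; auto.
Qed.

Lemma C_borel_structure : is_borel_structure A (fun w => delta (x0 w)) borel_Csection.
Proof.
  split; [exact delta_borel|split; [exact borel_Csection_maximal|]].
  exists (fun f => exists n, f = cone_family n). split; [|split].
  - exists (fun f => epsilon (inhabits 0%nat) (fun n => f = cone_family n)).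
    intros f g Hf Hg Hfg.
    rewrite (epsilon_spec (inhabits 0%nat) _ Hf), (epsilon_spec (inhabits 0%nat) _ Hg), Hfg.
    reflexivity.
  - intros f [n ->]. apply cone_family_borel.
  - intros w g e He. destruct (cone_family_dense w g e He) as [n Hn].
    exists (cone_family n). split; eauto.
Qed.

Definition vanishing_cone (n : nat) : section (fun w => Cfun (X w)) :=
  fun w => Cfun_normalize (X w) (x0 w) (cone_family n w).

Lemma vanishing_cone_borel n : borel_Csection (vanishing_cone n).
Proof.
  intros x Hx. apply (sublevel_meas_borel HA). unfold vanishing_cone, Cfun_app; simpl.
  apply (sublevel_meas_plus HA); [|apply (sublevel_meas_opp HA)];
    apply borel_sublevel_meas, cone_family_borel; auto.
Qed.

Lemma C0_borel_subfield : borel_subfield A (fun w => delta (x0 w)) borel_Csection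
  (fun w (f : Cfun (X w)) => Cfun_app f (x0 w) = 0).
Proof.
  split.
  - apply (meas_ext (fun _ => True)); [|apply (meas_const HA)].
    intro w; split; auto. intros _.
    exists (exist _ (fun _ => 0) (continuous_const (X w) 0)). reflexivity.
  - exists vanishing_cone. split; [exact vanishing_cone_borel|].
    intros w _. split; [intro n; simpl; ring|].
    intros a Ha e He.
    destruct (cone_family_dense w a (e / 2)) as [m Hm]; [lra|].
    exists m. pose proof (delta_normalize (X w) (x0 w) (Hproper w) (cone_family m w) a Ha).
    unfold vanishing_cone. lra.
Qed.

End CFunctionField.

Theorem mainTheorem6
  (O : Type) (A : (O -> Prop) -> Prop) (HA : sigma_algebra A)
  (X : O -> MetricSpace) (Hproper : forall w, proper (X w))
  (L : section (fun w => carrier (X w)) -> Prop)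
  (HL : is_borel_structure A (fun w => mdist (X w)) L)
  (x0 : section (fun w => carrier (X w))) (Hx0 : L x0) :
  (forall w, is_metric (delta (x0 w))) /\
  is_borel_structure A (fun w => delta (x0 w))
    (fun f : section (fun w => Cfun (X w)) =>
       forall x : section (fun w => carrier (X w)), L x -> borel_fun A (fun w => Cfun_app (f w) (x w))) /\
  borel_subfield A (fun w => delta (x0 w))
    (fun f : section (fun w => Cfun (X w)) =>
       forall x : section (fun w => carrier (X w)), L x -> borel_fun A (fun w => Cfun_app (f w) (x w)))
    (fun w (f : Cfun (X w)) => Cfun_app f (x0 w) = 0).
Proof.
  destruct HL as [HLdist [_ [D [HDcount [HDL HDdense]]]]].
  destruct (countable_dense_sequence O (fun w => carrier (X w)) (fun w => mdist (X w))
              L x0 Hx0 D HDcount HDL HDdense) as [s [HsL Hsdense]].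
  split; [|split].
  - intro w. apply delta_is_metric, Hproper.
  - exact (C_borel_structure O A HA X Hproper L HLdist x0 Hx0 s HsL Hsdense).
  - exact (C0_borel_subfield O A HA X Hproper L HLdist x0 Hx0 s HsL Hsdense).
Qed.
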